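(* Let $X$ be a uniformly convex, uniformly smooth real Banach space. Every closed convex cone $K\subseteq X$ has a convex polar $K^\circ$ if and only if every wedge $W(a,b)$ ($a,b\in S^*$, $b\notin\{a,-a\}$) has a convex polar.
   Context: $X^*$ is the norm dual of $X$ with pairing $\langle\cdot,\cdot\rangle$ and $S^*=\{c\in X^*:\|c\|_{X^*}=1\}$. For $a,b\in S^*$, $b\notin\{a,-a\}$, $\delta(a,b)=\{(\lambda a+\mu b)/\|\lambda a+\mu b\|_{X^*}:\lambda,\mu\ge0,(\lambda,\mu)\ne(0,0)\}$, and the wedge is $W(a,b)=\{x\in X:\langle c,x\rangle\le 0\ \forall c\in\delta(a,b)\}$. For a closed convex cone $K$, the metric projection is $P_Kx=\operatorname{argmin}\{\|x-k\|:k\in K\}$ (well defined and single valued here) and the polar is $K^\circ=\{x\in X:P_Kx=0\}$. *)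

From HB Require Import structures.
From mathcomp Require Import all_boot all_order all_algebra.
From mathcomp Require Import all_classical all_reals.
From mathcomp Require Import topology normedtype.
Set Implicit Arguments. Unset Strict Implicit. Unset Printing Implicit Defensive.
Import Order.TTheory GRing.Theory Num.Theory.
Import numFieldNormedType.Exports.
Local Open Scope classical_set_scope.
Local Open Scope ring_scope.

Section Defs.
Context {R : realType} {X : normedModType R}.

Definition uniformly_convex : Prop :=
  forall eps : R, 0 < eps -> eps <= 2 ->
    exists2 delta : R, 0 < delta &
      forall x y : X, `|x| <= 1 -> `|y| <= 1 -> eps <= `|x - y| ->
        `|2^-1 *: (x + y)| <= 1 - delta.

(** Uniform smoothness (modulus of smoothness rho(t) = o(t)):
    for every eps > 0 there is delta > 0 with
    ||x|| = 1, ||y|| <= delta  ==>  ||x+y|| + ||x-y|| <= 2 + eps ||y||. *)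
Definition uniformly_smooth : Prop :=
  forall eps : R, 0 < eps ->
    exists2 delta : R, 0 < delta &
      forall x y : X, `|x| = 1 -> `|y| <= delta ->
        `|x + y| + `|x - y| <= 2 + eps * `|y|.

Definition dual : set (X -> R) :=
  [set c | (forall (a : R) (u v : X), c (a *: u + v) = a * c u + c v)
           /\ continuous c].

Definition dnorm (c : X -> R) : R :=
  sup [set `|c x| | x in [set x : X | `|x| <= 1]].

Definition Sstar : set (X -> R) := [set c | dual c /\ dnorm c = 1].

Definition delta_ab (a b : X -> R) : set (X -> R) :=
  [set c | exists (l m : R), [/\ 0 <= l, 0 <= m, (l, m) != (0, 0) &
      c = (fun x => (l * a x + m * b x) /
                    dnorm (fun y => l * a y + m * b y))]].

Definition wedge (a b : X -> R) : set X :=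
  [set x | forall c, delta_ab a b c -> c x <= 0].

Definition convex_set_ (A : set X) : Prop :=
  forall x y : X, A x -> A y -> forall t : R, 0 <= t -> t <= 1 ->
    A (t *: x + (1 - t) *: y).

Definition cone (K : set X) : Prop :=
  K 0 /\ forall (t : R) (x : X), 0 <= t -> K x -> K (t *: x).

Definition closed_convex_cone (K : set X) : Prop :=
  closed K /\ convex_set_ K /\ cone K.

Definition argmin_dist (K : set X) (x : X) : set X :=
  [set p | K p /\ forall k, K k -> `|x - p| <= `|x - k|].

(** Polar: K^o = { x | P_K x = 0 }, i.e. the argmin is exactly {0}. *)
Definition polar (K : set X) : set X :=
  [set x | argmin_dist K x = [set 0]].

End Defs.

(* Only the converse needs an argument.  Uniform smoothness makes the norm
   Gateaux differentiable, so a nonzero point x of the polar of K is normed by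
   the derivative a of the norm at x/|x|, a functional of S^* that is
   nonpositive on K.  Uniform convexity makes the norm strictly convex, hence x
   lies in the polar of every cone on which a is nonpositive.  For x, y in the
   polar of K with norming functionals a and b: if b = a, then a also norms
   every convex combination of x and y; if b = -a, strict convexity forces y to
   be a negative multiple of x, and the whole line through x lies in the polar;
   otherwise K is contained in W(a,b), x and y lie in the convex polar of
   W(a,b), and a point whose nearest point in W(a,b) is 0 also has 0 as its
   nearest point in K. *)

From HB Require Import structures.
From mathcomp Require Import all_boot all_order all_algebra.
From mathcomp Require Import all_classical all_reals.
From mathcomp Require Import topology normedtype.
From mathcomp Require Import ring lra.
Import Order.TTheory GRing.Theory Num.Theory.
Import numFieldNormedType.Exports.
Local Open Scope classical_set_scope.
Local Open Scope ring_scope.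
Section Banach.
Set Implicit Arguments.
Unset Strict Implicit.
Context {R : realType} {X : normedModType R}.

Definition linear_form (c : X -> R) : Prop :=
  forall (a : R) (u v : X), c (a *: u + v) = a * c u + c v.

Section LinearForm.
Variable c : X -> R.
Hypothesis c_lin : linear_form c.

Lemma linear_form0 : c 0 = 0.
Proof. by have := c_lin 1 0 0; rewrite scale1r addr0 mul1r; lra. Qed.

Lemma linear_formZ a u : c (a *: u) = a * c u.
Proof. by rewrite -[a *: u]addr0 c_lin linear_form0 addr0. Qed.

Lemma linear_formD u v : c (u + v) = c u + c v.
Proof. by rewrite -[u]scale1r c_lin mul1r scale1r. Qed.

Lemma linear_formN u : c (- u) = - c u.
Proof. by rewrite -scaleN1r linear_formZ mulN1r. Qed.

Lemma linear_formB u v : c (u - v) = c u - c v.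
Proof. by rewrite linear_formD linear_formN. Qed.

Lemma linear_form_continuous (M : R) : 0 <= M ->
  (forall v, `|c v| <= M * `|v|) -> continuous c.
Proof.
move=> M0 cM x; apply/cvgrPdist_lt => e e0.
have eM0 : 0 < e / (M + 1) by apply: divr_gt0 => //; lra.
near=> y; rewrite -linear_formB; apply: le_lt_trans (cM _) _.
have xy : `|x - y| < e / (M + 1).
  by near: y; have := @near_ball _ _ x _ eM0; apply: filterS => y; rewrite -ball_normE.
apply: le_lt_trans (ler_wpM2l M0 (ltW xy)) _.
rewrite mulrA ltr_pdivrMr; [nra | lra].
Unshelve. all: by end_near.
Qed.

End LinearForm.

Lemma uniformly_convex_midpoint_lt (r : R) (u w : X) : @uniformly_convex R X ->
  `|u| <= r -> `|w| <= r -> u != w -> `|2^-1 *: (u + w)| < r.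
Proof.
move=> UC ur wr uw.
have r0 : 0 < r.
  rewrite ltNge; apply: contra uw => r0.
  have /normr0_eq0-> : `|u| = 0 by apply/eqP; rewrite eq_le normr_ge0 (le_trans ur).
  by have /normr0_eq0-> : `|w| = 0 by apply/eqP; rewrite eq_le normr_ge0 (le_trans wr).
have nr : `|r^-1| = r^-1 by rewrite ger0_norm // invr_ge0 ltW.
have unit_ball (v : X) : `|v| <= r -> `|r^-1 *: v| <= 1.
  by move=> vr; rewrite normrZ nr ler_pdivrMl // mulr1.
have e0 : 0 < `|r^-1 *: u - r^-1 *: w|.
  by rewrite -scalerBr normrZ mulr_gt0 ?normr_gt0 ?subr_eq0 ?invr_eq0 ?gt_eqF.
have e2 : `|r^-1 *: u - r^-1 *: w| <= 2.
  by apply: le_trans (ler_normB _ _) _; have := unit_ball _ ur; have := unit_ball _ wr; lra.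
have [d d0 /(_ _ _ (unit_ball _ ur) (unit_ball _ wr) (lexx _))] := UC _ e0 e2.
rewrite -scalerDr scalerA mulrC -scalerA normrZ nr ler_pdivrMl // => mid_le.
by apply: le_lt_trans mid_le _; nra.
Qed.

Lemma dnorm_ge0 (c : X -> R) : 0 <= dnorm c.
Proof.
rewrite /dnorm; set E := (X in sup X).
have E0 : E `|c 0| by exists 0; rewrite /= ?normr0.
have [supE|/sup_out->//] := pselect (has_sup E).
exact: le_trans (normr_ge0 _) (sup_upper_bound supE E0).
Qed.

Lemma dnorm1_le (c : X -> R) : linear_form c -> dnorm c = 1 ->
  forall v, `|c v| <= `|v|.
Proof.
rewrite /dnorm; set E := (X in sup X) => c_lin supE1 v.
have supE : has_sup E.
  by apply: contrapT => /sup_out; rewrite supE1 => /eqP; rewrite oner_eq0.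
have [->|v0] := eqVneq v 0; first by rewrite (linear_form0 c_lin) !normr0.
have nv : 0 < `|v| by rewrite normr_gt0.
have Ev : E `|c (`|v|^-1 *: v)|.
  by exists (`|v|^-1 *: v); rewrite //= normrZ normfV normr_id mulVf ?gt_eqF.
move: (sup_upper_bound supE Ev); rewrite supE1 (linear_formZ c_lin) normrM normfV normr_id.
by rewrite ler_pdivrMl // mulr1.
Qed.

Lemma dnorm_eq1 (c : X -> R) (x : X) : (forall v, `|c v| <= `|v|) ->
  `|x| = 1 -> c x = 1 -> dnorm c = 1.
Proof.
rewrite /dnorm; set E := (X in sup X) => c_le nx cx.
have E1 : E 1 by exists x; rewrite /= ?nx // cx normr1.
have ubE : ubound E 1 by move=> _ [y /= y1 <-]; exact: le_trans (c_le y) y1.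
apply/eqP; rewrite eq_le ge_sup //=; last by exists 1.
by apply: sup_upper_bound => //; split; exists 1.
Qed.

Lemma Sstar_linear (c : X -> R) : Sstar c -> linear_form c.
Proof. by case=> -[]. Qed.

Lemma Sstar_le (c : X -> R) : Sstar c -> forall v, `|c v| <= `|v|.
Proof. by move=> Sc; apply: dnorm1_le (Sstar_linear Sc) (proj2 Sc). Qed.

Lemma polarP (K : set X) (z : X) : polar K z <->
  [/\ K 0, forall k, K k -> `|z| <= `|z - k|
         & forall p, K p -> `|z - p| <= `|z| -> p = 0].
Proof.
split=> [pz | [K0 zmin zuniq]].
  have [K0 minz0] : argmin_dist K z 0 by rewrite pz.
  have zmin k : K k -> `|z| <= `|z - k| by move/minz0; rewrite subr0.
  split=> // p Kp zp; have : argmin_dist K z p.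
    by split=> // k Kk; apply: le_trans zp (zmin _ Kk).
  by rewrite pz.
apply/seteqP; split=> [p [Kp pmin] | _ ->] /=.
  by apply: zuniq => //; have := pmin 0 K0; rewrite subr0.
by split=> // k Kk; rewrite subr0 zmin.
Qed.

Lemma polarZ (K : set X) (x : X) (s : R) : cone K -> polar K x -> 0 <= s ->
  polar K (s *: x).
Proof.
move=> [K0 KZ] /polarP[_ xmin xuniq]; rewrite le_eqVlt => /predU1P[<-|s0].
  rewrite scale0r; apply/polarP; split=> // [k _|p _]; first by rewrite normr0.
  by rewrite sub0r normrN normr0 normr_le0 => /eqP.
have Ks k : K k -> K (s^-1 *: k) by apply: KZ; rewrite invr_ge0 ltW.
have sx_sub k : s *: x - k = s *: (x - s^-1 *: k).
  by rewrite scalerBr scalerA mulfV ?gt_eqF // scale1r.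
have norm_sx_sub k : `|s *: x - k| = s * `|x - s^-1 *: k|.
  by rewrite sx_sub normrZ gtr0_norm.
apply/polarP; split=> // [k Kk|p Kp].
  rewrite norm_sx_sub normrZ gtr0_norm // ler_pM2l //; exact/xmin/Ks.
rewrite norm_sx_sub normrZ gtr0_norm // ler_pM2l // => /(xuniq _ (Ks _ Kp)) /eqP.
by rewrite scaler_eq0 invr_eq0 gt_eqF //= => /eqP.
Qed.

Lemma polar_subset (K W : set X) (z : X) : K 0 -> K `<=` W ->
  polar W z -> polar K z.
Proof.
move=> K0 KW /polarP[_ zmin zuniq]; apply/polarP; split=> // [k Kk|p Kp].
  exact/zmin/KW.
exact/zuniq/KW.
Qed.

Lemma polar_collinear (K : set X) (x : X) (s : R) : cone K -> s < 0 ->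
  polar K x -> polar K (s *: x) -> forall r, polar K (r *: x).
Proof.
move=> cK s0 px psx r; have [r0|r0] := leP 0 r; first exact: polarZ.
have -> : r *: x = (r / s) *: (s *: x) by rewrite scalerA mulfVK ?lt_eqF.
by apply: polarZ => //; rewrite ltW // ltr_ndivlMr // mul0r.
Qed.

Section Norming.
Hypothesis UC : @uniformly_convex R X.
Variable c : X -> R.
Hypothesis c_lin : linear_form c.
Hypothesis c_le : forall v, `|c v| <= `|v|.

Lemma norming_uniq (u v : X) : `|u| = `|v| -> c u = `|u| -> c v = `|v| -> u = v.
Proof.
move=> uv cu cv; apply: contrapT => /eqP u_neq_v.
have vu : `|v| <= `|u| by rewrite uv.
have := uniformly_convex_midpoint_lt UC (lexx _) vu u_neq_v.
have c_mid : c (2^-1 *: (u + v)) = `|u|.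
  by rewrite (linear_formZ c_lin) (linear_formD c_lin) cu cv -uv; lra.
by have := c_le (2^-1 *: (u + v)); rewrite c_mid ger0_norm //; lra.
Qed.

Lemma norming_convex_comb (x y : X) (t : R) : 0 <= t -> t <= 1 ->
  c x = `|x| -> c y = `|y| -> c (t *: x + (1 - t) *: y) = `|t *: x + (1 - t) *: y|.
Proof.
move=> t0 t1 cx cy; apply/eqP; rewrite eq_le (le_trans (ler_norm _) (c_le _)) /=.
rewrite (linear_formD c_lin) !(linear_formZ c_lin) cx cy.
by apply: le_trans (ler_normD _ _) _; rewrite !normrZ !ger0_norm ?subr_ge0.
Qed.

Lemma norming_opposite (x y : X) : x != 0 -> y != 0 ->
  c x = `|x| -> c y = - `|y| -> exists2 s : R, s < 0 & y = s *: x.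
Proof.
move=> x0 y0 cx cy; have nx : 0 < `|x| by rewrite normr_gt0.
exists (- (`|y| / `|x|)); first by rewrite oppr_lt0 divr_gt0 // normr_gt0.
rewrite scaleNr -[y]opprK; congr (- _); apply: esym; apply: norming_uniq.
- by rewrite normrN normrZ normf_div !normr_id mulfVK ?gt_eqF.
- by rewrite (linear_formZ c_lin) cx mulfVK ?gt_eqF // normrZ normf_div !normr_id mulfVK ?gt_eqF.
- by rewrite (linear_formN c_lin) cy opprK normrN.
Qed.

Lemma polar_of_norming (K : set X) (z : X) : cone K ->
  (forall k, K k -> c k <= 0) -> c z = `|z| -> polar K z.
Proof.
move=> [K0 KZ] cK cz.
have zmin k : K k -> `|z| <= `|z - k|.
  move=> Kk; apply: le_trans (le_trans (ler_norm _) (c_le _)).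
  by rewrite (linear_formB c_lin) cz; have := cK _ Kk; lra.
apply/polarP; split=> // p Kp zp; apply: contrapT => /eqP p0.
have z_neq : z != z - p by rewrite -subr_eq0 opprB addrC subrK.
have := uniformly_convex_midpoint_lt UC (lexx _) zp z_neq.
have -> : 2^-1 *: (z + (z - p)) = z - 2^-1 *: p.
  have -> : z - 2^-1 *: p = (2^-1 + 2^-1 : R) *: z - 2^-1 *: p.
    by congr (_ - _); rewrite -[LHS]scale1r; congr (_ *: _); lra.
  by rewrite scalerDl scalerDr scalerBr addrA.
by rewrite ltNge zmin //; apply: KZ; rewrite ?invr_ge0.
Qed.

End Norming.

Section NormDerivative.
Variable x : X.
Hypothesis x1 : `|x| = 1.

Definition norm_quotient (v : X) (t : R) : R := (`|x + t *: v| - 1) / t.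

(* The difference quotient is nondecreasing in t (convexity of the norm), so its
   infimum is the one-sided derivative of the norm at x in direction v. *)
Definition norm_deriv (v : X) : R :=
  inf [set norm_quotient v t | t in [set t : R | 0 < t]].

Local Notation q := norm_quotient.
Local Notation D := norm_deriv.

Lemma norm_quotient_ge v t : 0 < t -> - `|v| <= q v t.
Proof.
move=> t0; rewrite /norm_quotient ler_pdivlMr //.
by have := ler_normB (x + t *: v) (t *: v); rewrite addrK x1 normrZ gtr0_norm //; nra.
Qed.

Lemma norm_quotient_le v t : 0 < t -> q v t <= `|v|.
Proof.
move=> t0; rewrite /norm_quotient ler_pdivrMr //.
by have := ler_normD x (t *: v); rewrite x1 normrZ gtr0_norm //; nra.
Qed.

Lemma norm_quotient_mono v s t : 0 < s -> s <= t -> q v s <= q v t.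
Proof.
move=> s0 st; have t0 : 0 < t := lt_le_trans s0 st.
set l := s / t; have l0 : 0 < l by apply: divr_gt0.
have l1 : l <= 1 by rewrite ler_pdivrMr // mul1r.
have xs_conv : x + s *: v = (1 - l) *: x + l *: (x + t *: v).
  by rewrite scalerDr scalerA mulfVK ?gt_eqF // addrA -scalerDl subrK scale1r.
have xs_le : `|x + s *: v| <= (1 - l) + l * `|x + t *: v|.
  have n1 : `|(1 - l) *: x| = 1 - l by rewrite normrZ x1 mulr1 ger0_norm // subr_ge0.
  have n2 : `|l *: (x + t *: v)| = l * `|x + t *: v| by rewrite normrZ ger0_norm // ltW.
  by rewrite xs_conv; apply: le_trans (ler_normD _ _) _; rewrite n1 n2.
by rewrite /norm_quotient ler_pdivrMr // mulrAC -mulrA -/l mulrC; lra.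
Qed.

Lemma has_inf_norm_quotient v : has_inf [set q v t | t in [set t : R | 0 < t]].
Proof.
split; first by exists (q v 1), 1 => //=; exact: ltr01.
by exists (- `|v|) => _ [t /= t0 <-]; apply: norm_quotient_ge.
Qed.

Lemma norm_deriv_le v t : 0 < t -> D v <= q v t.
Proof. by move=> t0; apply: ge_inf; [case: (has_inf_norm_quotient v) | exists t]. Qed.

Lemma norm_deriv_ge v L : (forall t, 0 < t -> L <= q v t) -> L <= D v.
Proof.
move=> Lq; apply: lb_le_inf; first by exists (q v 1), 1 => //=; exact: ltr01.
by move=> _ [t /= t0 <-]; exact: Lq.
Qed.

Lemma norm_deriv_approx v e : 0 < e ->
  exists2 t, 0 < t & forall s, 0 < s -> s <= t -> q v s < D v + e.
Proof.
move=> e0; have [_ [t /= t0 <-] qt] := inf_adherent e0 (has_inf_norm_quotient v).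
by exists t => // s s0 st; apply: le_lt_trans (norm_quotient_mono v s0 st) qt.
Qed.

Lemma norm_derivE v L : (forall t, 0 < t -> L <= q v t) ->
  (forall e, 0 < e -> exists2 t, 0 < t & q v t < L + e) -> D v = L.
Proof.
move=> Lq Lapprox; apply/eqP; rewrite eq_le norm_deriv_ge // andbT.
apply/ler_addgt0Pr => e e0; have [t t0 qt] := Lapprox e e0.
exact: le_trans (norm_deriv_le v t0) (ltW qt).
Qed.

Lemma norm_deriv_bound v : `|D v| <= `|v|.
Proof.
rewrite ler_norml norm_deriv_ge => [|t]; last exact: norm_quotient_ge.
exact: le_trans (norm_deriv_le v ltr01) (norm_quotient_le v ltr01).
Qed.

Lemma norm_deriv_subadditive u v : D (u + v) <= D u + D v.
Proof.
apply/ler_addgt0Pr => e e0; have e20 : 0 < e / 2 by apply: divr_gt0.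
have [tu tu0 qu] := norm_deriv_approx u e20.
have [tv tv0 qv] := norm_deriv_approx v e20.
set t := Order.min tu tv; have t0 : 0 < t by rewrite lt_min tu0 tv0.
have qut : q u t < D u + e / 2 by apply: qu; rewrite // ge_min lexx.
have qvt : q v t < D v + e / 2 by apply: qv; rewrite // ge_min lexx orbT.
have t20 : 0 < t / 2 by apply: divr_gt0.
apply: le_trans (norm_deriv_le (u + v) t20) _.
have mid : x + (t / 2) *: (u + v) = 2^-1 *: ((x + t *: u) + (x + t *: v)).
  rewrite !scalerDr !scalerA [2^-1 * t]mulrC addrACA -scalerDl.
  by congr (_ + _); rewrite -[LHS]scale1r; congr (_ *: _); lra.
have mid_le : `|x + (t / 2) *: (u + v)| <= 2^-1 * (`|x + t *: u| + `|x + t *: v|).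
  by rewrite mid normrZ ger0_norm ?invr_ge0 // ler_wpM2l ?invr_ge0 // ler_normD.
have : q (u + v) (t / 2) <= q u t + q v t.
  rewrite /norm_quotient ler_pdivrMr // mulrDl !mulrA !mulfVK ?gt_eqF //; lra.
lra.
Qed.

Lemma norm_quotientZ u s t : 0 < s -> 0 < t -> q (s *: u) t = s * q u (s * t).
Proof. by move=> s0 t0; rewrite /norm_quotient scalerA [t * s]mulrC; field; rewrite ?gt_eqF. Qed.

Lemma norm_derivZ_pos u s : 0 < s -> D (s *: u) = s * D u.
Proof.
move=> s0; apply: norm_derivE => [t t0|e e0].
  by rewrite norm_quotientZ // ler_pM2l // norm_deriv_le // mulr_gt0.
have [t t0 /(_ t t0 (lexx t)) qt] := norm_deriv_approx u (divr_gt0 e0 s0).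
exists (t / s); first exact: divr_gt0.
rewrite norm_quotientZ ?divr_gt0 // [s * (t / s)]mulrC mulfVK ?gt_eqF //.
have -> : s * D u + e = s * (D u + e / s) by rewrite mulrDr mulrCA mulfV ?gt_eqF ?mulr1.
by rewrite ltr_pM2l.
Qed.

Lemma norm_deriv0 : D 0 = 0.
Proof. by have := norm_derivZ_pos 0 (ltr0n _ 2); rewrite scaler0; lra. Qed.

Lemma norm_deriv_self : D x = 1.
Proof.
have q_self t : 0 < t -> q x t = 1.
  move=> t0; rewrite /norm_quotient -{1}[x]scale1r -scalerDl normrZ x1 mulr1 ger0_norm; last lra.
  by rewrite addrAC subrr add0r mulfV ?gt_eqF.
apply: norm_derivE => [t /q_self->//|e e0]; exists 1 => //; rewrite q_self //; lra.
Qed.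

Hypothesis US : @uniformly_smooth R X.

Lemma norm_derivN u : D (- u) = - D u.
Proof.
suff odd_le : D u + D (- u) <= 0.
  by have := norm_deriv_subadditive u (- u); rewrite subrr norm_deriv0; lra.
(* Uniform smoothness at x, applied to the increment t u with t small, makes
   q u t + q (- u) t smaller than any e > 0. *)
apply/ler_addgt0Pr => e e0; have nu0 : 0 < `|u| + 1 by have := normr_ge0 u; lra.
set e' := e / (`|u| + 1); have e'0 : 0 < e' by apply: divr_gt0.
have [d d0 smooth] := US e'0.
set t := d / (`|u| + 1); have t0 : 0 < t by apply: divr_gt0.
have ntu : `|t *: u| = t * `|u| by rewrite normrZ gtr0_norm.
have tud : `|t *: u| <= d.
  by rewrite ntu /t mulrAC ler_pdivrMr //; have := normr_ge0 u; nra.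
have := smooth x (t *: u) x1 tud; rewrite ntu => sum_le.
have q_sum : q u t + q (- u) t <= e' * `|u|.
  by rewrite /norm_quotient -mulrDl ler_pdivrMr // scalerN; nra.
have : e' * `|u| <= e by rewrite /e' mulrAC ler_pdivrMr //; have := normr_ge0 u; nra.
by have := norm_deriv_le u t0; have := norm_deriv_le (- u) t0; lra.
Qed.

Lemma norm_deriv_linear : linear_form D.
Proof.
have DD u v : D (u + v) = D u + D v.
  apply/eqP; rewrite eq_le norm_deriv_subadditive /=.
  by have := norm_deriv_subadditive (u + v) (- v); rewrite addrK norm_derivN; lra.
move=> a u v; rewrite DD; congr (_ + _).
have [a0|a0|->] := ltgtP a 0; last by rewrite scale0r norm_deriv0 mul0r.
  by rewrite -[a *: u]opprK -scaleNr norm_derivN norm_derivZ_pos ?oppr_gt0 // mulNr opprK.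
exact: norm_derivZ_pos.
Qed.

Lemma norm_deriv_polar_le0 (K : set X) : cone K -> polar K x ->
  forall k, K k -> D k <= 0.
Proof.
move=> [_ KZ] /polarP[_ xmin _] k Kk.
suff : 0 <= D (- k) by rewrite norm_derivN; lra.
apply: norm_deriv_ge => t t0; rewrite /norm_quotient divr_ge0 ?(ltW t0) // subr_ge0 -x1 scalerN.
exact/xmin/KZ/Kk/ltW.
Qed.

End NormDerivative.

Lemma norming_functional (K : set X) (x : X) : @uniformly_smooth R X ->
  cone K -> polar K x -> x != 0 ->
  exists a : X -> R, [/\ Sstar a, forall k, K k -> a k <= 0 & a x = `|x|].
Proof.
move=> US cK px x0; have nx : 0 < `|x| by rewrite normr_gt0.
set x1 := `|x|^-1 *: x.
have nx1 : `|x1| = 1 by rewrite normrZ normfV normr_id mulVf ?gt_eqF.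
have px1 : polar K x1 by apply: polarZ; rewrite ?invr_ge0 ?ltW.
have D_lin := norm_deriv_linear nx1 US.
have D_le := norm_deriv_bound nx1.
have D_K := norm_deriv_polar_le0 nx1 US cK px1.
exists (norm_deriv x1); split.
- split; last exact: dnorm_eq1 D_le nx1 (norm_deriv_self nx1).
  split=> //; apply: (linear_form_continuous D_lin ler01) => v.
  by rewrite mul1r.
- exact: D_K.
- have -> : x = `|x| *: x1 by rewrite scalerA mulfV ?gt_eqF ?scale1r.
  by rewrite (linear_formZ D_lin) norm_deriv_self // mulr1 normrZ nx1 mulr1 normr_id.
Qed.

Lemma delta_ab_dual (a b c : X -> R) : dual a -> dual b -> delta_ab a b c -> dual c.
Proof.
move=> [a_lin a_cont] [b_lin b_cont] [l [m [_ _ _ ->]]]; split.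
  by move=> s u v; rewrite a_lin b_lin; ring.
move=> x; apply: cvgMr_tmp; apply: cvgD; apply: cvgMl_tmp; [exact: a_cont | exact: b_cont].
Qed.

Lemma delta_ab_l (a b : X -> R) : dnorm a = 1 -> delta_ab a b a.
Proof.
move=> na; exists 1, 0; split; rewrite ?lexx ?ler01 ?xpair_eqE ?oner_eq0 //.
have -> : (fun y => 1 * a y + 0 * b y) = a by apply/funext => y; rewrite mul1r mul0r addr0.
by rewrite na; apply/funext => y; rewrite mul1r mul0r addr0 divr1.
Qed.

Lemma delta_ab_r (a b : X -> R) : dnorm b = 1 -> delta_ab a b b.
Proof.
move=> nb; exists 0, 1; split; rewrite ?lexx ?ler01 ?xpair_eqE ?oner_eq0 ?andbF //.
have -> : (fun y => 0 * a y + 1 * b y) = b by apply/funext => y; rewrite mul1r mul0r add0r.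
by rewrite nb; apply/funext => y; rewrite mul1r mul0r add0r divr1.
Qed.

Lemma wedge_closed_convex_cone (a b : X -> R) : dual a -> dual b ->
  closed_convex_cone (wedge a b).
Proof.
move=> da db; have c_lin c : delta_ab a b c -> linear_form c.
  by move=> /(delta_ab_dual da db) [].
split; [|split; [|split]].
- have -> : wedge a b = \bigcap_(c in delta_ab a b) (c @^-1` [set r : R | r <= 0]).
    by apply/seteqP; split=> x wx c /wx.
  apply: closed_bigI => c /(delta_ab_dual da db) [_ c_cont].
  by apply: preimage_closed; [move=> x _; exact: c_cont | exact: closed_le].
- move=> x y wx wy t t0 t1 c dc; have Lc := c_lin c dc.
  by have := wx c dc; have := wy c dc; rewrite (linear_formD Lc) !(linear_formZ Lc); nra.
- by move=> c /c_lin /linear_form0->.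
- move=> t x t0 wx c dc; have := wx c dc.
  by rewrite (linear_formZ (c_lin c dc)); nra.
Qed.

Lemma sub_wedge (K : set X) (a b : X -> R) :
  (forall k, K k -> a k <= 0) -> (forall k, K k -> b k <= 0) -> K `<=` wedge a b.
Proof.
move=> aK bK k Kk _ [l [m [l0 m0 _ ->]]] /=.
rewrite mulr_le0_ge0 ?invr_ge0 ?dnorm_ge0 //.
by have := aK k Kk; have := bK k Kk; nra.
Qed.

Lemma polar_wedge (a b c : X -> R) (z : X) : @uniformly_convex R X ->
  Sstar a -> Sstar b -> Sstar c -> delta_ab a b c -> c z = `|z| ->
  polar (wedge a b) z.
Proof.
move=> UC [da _] [db _] Sc dc cz.
have [_ [_ cW]] := wedge_closed_convex_cone da db.
by apply: (polar_of_norming UC (Sstar_linear Sc) (Sstar_le Sc) cW) => // w /(_ c dc).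
Qed.

End Banach.

Theorem mainTheorem7 (R : realType) (X : completeNormedModType R) :
  @uniformly_convex R X -> @uniformly_smooth R X ->
  ((forall K : set X, closed_convex_cone K -> convex_set_ (polar K)) <->
   (forall a b : X -> R, Sstar a -> Sstar b ->
      b <> a -> b <> (fun x => - a x) -> convex_set_ (polar (wedge a b)))).
Proof.
move=> UC US; split=> [polarK a b [da _] [db _] _ _ | polarW K [_ [_ cK]] x y px py t t0 t1].
  exact/polarK/wedge_closed_convex_cone.
have [->|x0] := eqVneq x 0; first by rewrite scaler0 add0r; apply: polarZ; rewrite // subr_ge0.
have [->|y0] := eqVneq y 0; first by rewrite scaler0 addr0; exact: polarZ.
have [a [Sa aK a_x]] := norming_functional US cK px x0.
have [b [Sb bK b_y]] := norming_functional US cK py y0.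
have [a_lin a_le] := (Sstar_linear Sa, Sstar_le Sa).
have [ba|b_neq_a] := pselect (b = a).
  apply: (polar_of_norming UC a_lin a_le cK aK).
  by subst b; apply: (norming_convex_comb a_lin a_le).
have [bNa|b_neq_Na] := pselect (b = fun v => - a v).
  have a_y : a y = - `|y| by rewrite -b_y bNa opprK.
  have [s s0 y_eq] := norming_opposite UC a_lin a_le x0 y0 a_x a_y.
  have psx : polar K (s *: x) by rewrite -y_eq.
  by rewrite y_eq scalerA -scalerDl; exact: (polar_collinear cK s0 px psx (t + (1 - t) * s)).
apply: (polar_subset (proj1 cK) (sub_wedge aK bK)).
apply: (polarW a b Sa Sb b_neq_a b_neq_Na) => //.
- exact: (polar_wedge UC Sa Sb Sa (delta_ab_l b (proj2 Sa)) a_x).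
- exact: (polar_wedge UC Sa Sb Sb (delta_ab_r a (proj2 Sb)) b_y).
Qed.
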